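(* Let $f\colon\prod_{i\in[n]}X_i\to Y$ satisfy condition (BC) and $\Phi_k^-\le\Phi_k^+$ for all $k\in[n]$, and let $\varphi_k\colon X_k\to Y$ ($k\in[n]$) be maps satisfying the boundary condition with $\Phi_k^-\le\varphi_k\le\Phi_k^+$ for all $k$. Put $a_k=\varphi_k(0_{X_k})$, $b_k=\varphi_k(1_{X_k})$, and for $I\subseteq[n]$ let $\mathbf{e}_I\in Y^n$ have $i$-th component $b_i$ if $i\in I$ and $a_i$ if $i\notin I$. Then a polynomial function $p\colon Y^n\to Y$ satisfies $f(\mathbf{x})=p(\varphi_1(x_1),\ldots,\varphi_n(x_n))$ for all $\mathbf{x}$ if and only if $p(\mathbf{e}_I)=f(\widehat{\mathbf{1}}_I)$ for all $I\subseteq[n]$.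
   Context: $Y$ is a finite distributive lattice identified with a sublattice of $\mathcal{P}(U)$ for a finite set $U$, with least element $0=\emptyset$, greatest element $1=U$, and $\wedge,\vee$ being intersection and union; $\overline{S}=U\setminus S$. For $S\subseteq U$, $\operatorname{cl}(S)=\bigwedge\{y\in Y: y\ge S\}$, $\operatorname{int}(S)=\bigvee\{y\in Y: y\le S\}$. $[n]=\{1,\ldots,n\}$; $X_1,\ldots,X_n$ are arbitrary sets with at least two elements, each with two fixed distinct elements $0_{X_k},1_{X_k}$ (written $0,1$). For $\mathbf{x}\in\prod_i X_i$ and $a\in X_k$, $\mathbf{x}_k^a$ is $\mathbf{x}$ with $k$-th component replaced by $a$. For $I\subseteq[n]$, $\widehat{\mathbf{1}}_I$ is the tuple whose $i$-th component is $1_{X_i}$ if $i\in I$ and $0_{X_i}$ otherwise. A map $\varphi_k\colon X_k\to Y$ satisfies the boundary condition if $\varphi_k(0_{X_k})\le\varphi_k(x_k)\le\varphi_k(1_{X_k})$ for all $x_k$. A polynomial function $Y^n\to Y$ is a composition of $\wedge,\vee$ with variables and constants. Condition (BC): $f(\mathbf{x}_k^0)\le f(\mathbf{x})\le f(\mathbf{x}_k^1)$ for all $k$ and $\mathbf{x}$. For $k\in[n]$, $a_k\in X_k$: $$\Phi_k^-(a_k)=\bigvee_{\mathbf{x}:\,x_k=a_k}\operatorname{cl}\big(f(\mathbf{x})\wedge\overline{f(\mathbf{x}_k^0)}\big),\qquad \Phi_k^+(a_k)=\bigwedge_{\mathbf{x}:\,x_k=a_k}\operatorname{int}\big(f(\mathbf{x})\vee\overline{f(\mathbf{x}_k^1)}\big),$$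 ranging over all $\mathbf{x}$ with $k$-th component $a_k$. *)

From HB Require Import structures.
From mathcomp Require Import all_boot.
From Stdlib Require Import ClassicalEpsilon.
Set Implicit Arguments. Unset Strict Implicit. Unset Printing Implicit Defensive.

Definition pb (P : Prop) : bool :=
  if excluded_middle_informative P then true else false.

Section Defs.
Variable U : finType.

(* Y : a (finite, distributive) sublattice of P(U) containing 0 = set0 and 1 = setT *)
Definition is_sublattice01 (Y : {set {set U}}) : Prop :=
  [/\ set0 \in Y, setT \in Y,
      (forall y z, y \in Y -> z \in Y -> y :|: z \in Y) &
      (forall y z, y \in Y -> z \in Y -> y :&: z \in Y)].

Definition cl (Y : {set {set U}}) (S : {set U}) : {set U} :=
  \bigcap_(y in Y | S \subset y) y.
Definition int (Y : {set {set U}}) (S : {set U}) : {set U} :=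
  \bigcup_(y in Y | y \subset S) y.

Variable n : nat.
Variable X : 'I_n -> Type.

Definition upd (x : forall i, X i) (k : 'I_n) (a : X k) : forall i, X i :=
  fun i => match k =P i with
           | ReflectT e => eq_rect k X a i e
           | ReflectF _ => x i
           end.

Definition hat1 (x0 x1 : forall i, X i) (I : {set 'I_n}) : forall i, X i :=
  fun i => if i \in I then x1 i else x0 i.

Arguments upd x k a i : clear implicits.
Definition BC (x0 x1 : forall i, X i) (f : (forall i, X i) -> {set U}) : Prop :=
  forall (k : 'I_n) (x : forall i, X i),
    f (upd x k (x0 k)) \subset f x /\ f x \subset f (upd x k (x1 k)).

(* Phi_k^-(a) = join (in Y, i.e. union) over x with x_k = a of cl(f x /\ ~ f(x_k^0)) *)
Definition PhiMinus (Y : {set {set U}}) (x0 : forall i, X i)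
    (f : (forall i, X i) -> {set U}) (k : 'I_n) (a : X k) : {set U} :=
  [set u | pb (exists x : forall i, X i,
                 x k = a /\ u \in cl Y (f x :&: ~: f (upd x k (x0 k))))].

(* Phi_k^+(a) = meet (in Y, i.e. intersection) over x with x_k = a of int(f x \/ ~ f(x_k^1)) *)
Definition PhiPlus (Y : {set {set U}}) (x1 : forall i, X i)
    (f : (forall i, X i) -> {set U}) (k : 'I_n) (a : X k) : {set U} :=
  [set u | pb (forall x : forall i, X i,
                 x k = a -> u \in int Y (f x :|: ~: f (upd x k (x1 k))))].

End Defs.

Inductive lpoly (U : finType) (n : nat) : Type :=
| LVar of 'I_n
| LConst of {set U}
| LMeet of lpoly U n & lpoly U n
| LJoin of lpoly U n & lpoly U n.

Fixpoint lconsts_in (U : finType) (n : nat) (Y : {set {set U}}) (t : lpoly U n) : bool :=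
  match t with
  | LVar _ => true
  | LConst c => c \in Y
  | LMeet t1 t2 => lconsts_in Y t1 && lconsts_in Y t2
  | LJoin t1 t2 => lconsts_in Y t1 && lconsts_in Y t2
  end.

Fixpoint leval (U : finType) (n : nat) (t : lpoly U n) (e : 'I_n -> {set U}) : {set U} :=
  match t with
  | LVar i => e i
  | LConst c => c
  | LMeet t1 t2 => leval t1 e :&: leval t2 e
  | LJoin t1 t2 => leval t1 e :|: leval t2 e
  end.

(* Both sides of the sought identity f(x) = p(phi_1(x_1), ..., phi_n(x_n))
   admit the same "disjunctive normal form" over U, where hat1 I is the
   vertex of prod_i X_i with coordinates 1 on I and 0 elsewhere:
     u in F(x)  <->  exists I, u in F(hat1 I) /\ forall i in I, u in phi_i(x_i).
   - For F = p o phi this holds for every lattice polynomial p and every phi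
     satisfying the boundary condition: membership in a join/meet of
     variables is witnessed by a finite set of "active" variables, and
     p o phi at hat1 I is p evaluated at the corner e_I of the box
     [phi(0), phi(1)] (leval_corner_decomp, poly_normal_form).
   - For F = f it follows from (BC) and Phi_k^- <= phi_k <= Phi_k^+: these
     give the one-variable splitting  u in f(x) <-> u in f(x_k^0) \/
     (u in f(x_k^1) /\ u in phi_k(x_k))  (f_split_at), which is then iterated
     over all coordinates (f_normal_form).
   Two functions with such a normal form are determined by their values at
   the points hat1 I (normal_form_unique); this gives the hard direction of the
   theorem, the other one being evaluation at hat1 I. *)

From Stdlib Require Import FunctionalExtensionality ClassicalEpsilon.
From mathcomp Require Import all_boot.

Lemma pbP (P : Prop) : reflect P (pb P).
Proof. by rewrite /pb; case: excluded_middle_informative => h; constructor. Qed.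

Section Update.
Variables (n : nat) (X : 'I_n -> Type).

Lemma upd_same (y : forall i, X i) (k : 'I_n) (a : X k) : upd y a k = a.
Proof. by rewrite /upd; case: eqP => [e|//]; rewrite (eq_irrelevance e erefl). Qed.

Lemma upd_other (y : forall i, X i) (k i : 'I_n) (a : X k) :
  k != i -> upd y a i = y i.
Proof. by rewrite /upd; case: eqP. Qed.

End Update.

Definition normal_form {U : finType} {n : nat} {X : 'I_n -> Type}
    (x0 x1 : forall i, X i) (phi : forall k, X k -> {set U})
    (F : (forall i, X i) -> {set U}) : Prop :=
  forall (x : forall i, X i) (u : U), u \in F x <->
    exists I : {set 'I_n}, u \in F (hat1 x0 x1 I) /\
                           forall i, i \in I -> u \in phi i (x i).

Section ClosureInterior.
Variables (U : finType) (Y : {set {set U}}).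

Lemma subset_cl (S : {set U}) : S \subset cl Y S.
Proof. by apply/subsetP => u uS; apply/bigcapP => y /andP[_ /subsetP]; apply. Qed.

Lemma int_subset (S : {set U}) : int Y S \subset S.
Proof. by apply/subsetP => u /bigcupP[y /andP[_ /subsetP yS] /yS]. Qed.

End ClosureInterior.

Section LatticePolynomials.
Variables (U : finType) (n : nat).
Implicit Types (t : lpoly U n) (e : 'I_n -> {set U}).

Lemma leval_ext t e e' : (forall i, e i = e' i) -> leval t e = leval t e'.
Proof. by move=> ee'; elim: t => //= [t1 -> t2 ->|t1 -> t2 ->]. Qed.

Lemma leval_mem_mono t e e' (u : U) :
  (forall i, u \in e i -> u \in e' i) -> u \in leval t e -> u \in leval t e'.
Proof.
move=> ee'; elim: t => /= [i|c|t1 IH1 t2 IH2|t1 IH1 t2 IH2] //; first exact: ee'.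
  by rewrite !inE => /andP[/IH1 -> /IH2 ->].
by rewrite !inE => /orP[/IH1 ->|/IH2 ->]; rewrite ?orbT.
Qed.

Definition corner (a b : 'I_n -> {set U}) (I : {set 'I_n}) : 'I_n -> {set U} :=
  fun i => if i \in I then b i else a i.

Lemma corner_mono (a b : 'I_n -> {set U}) (I J : {set 'I_n}) (u : U) :
  (forall i, a i \subset b i) -> I \subset J ->
  forall i, u \in corner a b I i -> u \in corner a b J i.
Proof.
move=> ab /subsetP IJ i; rewrite /corner.
case: ifPn => [/IJ -> //|_]; case: ifP => // _; exact: (subsetP (ab i)).
Qed.

Lemma leval_corner_decomp t (a b y : 'I_n -> {set U}) (u : U) :
  (forall i, a i \subset y i) -> (forall i, y i \subset b i) ->
  u \in leval t y <->
  exists I : {set 'I_n}, u \in leval t (corner a b I) /\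
                         forall i, i \in I -> u \in y i.
Proof.
move=> ay yb; have ab i : a i \subset b i := subset_trans (ay i) (yb i).
split; last first.
  case=> I [uI uy]; apply: leval_mem_mono uI => i; rewrite /corner.
  by case: ifP => [/uy //|_ /(subsetP (ay i))].
elim: t => /= [j|c|t1 IH1 t2 IH2|t1 IH1 t2 IH2].
- move=> uy; exists [set j]; split => [|i /set1P -> //].
  by rewrite /corner set11; apply: (subsetP (yb j)).
- by move=> uc; exists set0; split => // i; rewrite inE.
- rewrite inE => /andP[/IH1[I [u1 uI]] /IH2[J [u2 uJ]]].
  exists (I :|: J); split => [|i /setUP[/uI|/uJ] //].
  rewrite inE; apply/andP; split.
  + by apply: leval_mem_mono u1; apply: corner_mono; rewrite ?subsetUl.
  + by apply: leval_mem_mono u2; apply: corner_mono; rewrite ?subsetUr.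
- by rewrite inE => /orP[/IH1|/IH2] [I [uI uy]]; exists I; rewrite inE uI ?orbT.
Qed.

End LatticePolynomials.

Lemma leval_hat1 {U : finType} {n : nat} {X : 'I_n -> Type}
    (x0 x1 : forall i, X i) (phi : forall k, X k -> {set U})
    (t : lpoly U n) (I : {set 'I_n}) :
  leval t (fun i => phi i (hat1 x0 x1 I i)) =
  leval t (corner _ _ (fun i => phi i (x0 i)) (fun i => phi i (x1 i)) I).
Proof. by apply: leval_ext => i; rewrite /hat1 /corner; case: (i \in I). Qed.

Section FunctionDecomposition.
Variables (U : finType) (Y : {set {set U}}) (n : nat) (X : 'I_n -> Type)
  (x0 x1 : forall i, X i) (f : (forall i, X i) -> {set U})
  (phi : forall k, X k -> {set U}).
Hypothesis HBC : BC x0 x1 f.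
Hypothesis Hphi : forall k (a : X k),
  PhiMinus Y x0 f a \subset phi k a /\ phi k a \subset PhiPlus Y x1 f a.

(* One-variable splitting: varying x_k between 0 and 1, f is determined by
   its values at x_k^0, x_k^1 and by phi_k(x_k).  The lower bound Phi_k^-
   gives "->", the upper bound Phi_k^+ gives "<-". *)
Lemma f_split_at (y : forall i, X i) (k : 'I_n) (u : U) :
  u \in f y <->
  u \in f (upd y (x0 k)) \/ (u \in f (upd y (x1 k)) /\ u \in phi k (y k)).
Proof.
have [f0y fy1] := HBC k y; have [lo hi] := Hphi k (y k).
split => [uy|[/(subsetP f0y) //|[u1 /(subsetP hi)]]].
  have [//|u0] := boolP (u \in f (upd y (x0 k))); [by left|right].
  split; first exact: (subsetP fy1).
  apply: (subsetP lo); rewrite inE; apply/pbP; exists y; split => //.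
  by apply: (subsetP (subset_cl _ Y _)); rewrite !inE uy.
rewrite inE => /pbP /(_ y erefl) /(subsetP (int_subset _ Y _)).
by rewrite !inE u1 orbF.
Qed.

Definition pin (y : forall i, X i) (S J : {set 'I_n}) : forall i, X i :=
  fun i => if i \in S then (if i \in J then x1 i else x0 i) else y i.

Lemma pin_setT (y : forall i, X i) (J : {set 'I_n}) : pin y setT J = hat1 x0 x1 J.
Proof. by apply: functional_extensionality_dep => i; rewrite /pin inE. Qed.

Lemma pin_set0 (y : forall i, X i) (J : {set 'I_n}) : pin y set0 J = y.
Proof. by apply: functional_extensionality_dep => i; rewrite /pin inE. Qed.

Lemma pin_setU1 (y : forall i, X i) (S J : {set 'I_n}) (k : 'I_n) :
  pin y (k |: S) J = upd (pin y S (J :\ k)) (if k \in J then x1 k else x0 k).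
Proof.
apply: functional_extensionality_dep => i.
have [<-|ki] := eqVneq k i; first by rewrite upd_same /pin setU11.
by rewrite upd_other // /pin !inE eq_sym (negbTE ki).
Qed.

Lemma pin_setD1 (y : forall i, X i) (S J : {set 'I_n}) (k : 'I_n) :
  k \notin S -> pin y S (J :\ k) = pin y S J.
Proof.
move=> kS; apply: functional_extensionality_dep => i; rewrite /pin !inE.
by have [->|_] := eqVneq i k; rewrite ?(negbTE kS).
Qed.

Lemma f_split_pin (y : forall i, X i) (S J : {set 'I_n}) (k : 'I_n) (u : U) :
  k \notin S ->
  u \in f (pin y S J) <->
  u \in f (pin y (k |: S) (J :\ k)) \/
  (u \in f (pin y (k |: S) (k |: J)) /\ u \in phi k (y k)).
Proof.
move=> kS; have DD : J :\ k :\ k = J :\ k by apply/setP => i; rewrite !inE andbA andbb.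
have UD : (k |: J) :\ k = J :\ k by rewrite setDUl setDv set0U.
rewrite !pin_setU1 setD11 setU11 DD UD !pin_setD1 //.
by rewrite (f_split_at _ k) {3}/pin (negbTE kS).
Qed.

Lemma f_decomp_on (s : seq 'I_n) (y : forall i, X i) (u : U) :
  u \in f y <->
  exists J : {set 'I_n}, u \in f (pin y [set:: s] J) /\
                         forall i, i \in J -> u \in phi i (y i).
Proof.
elim: s => [|k s IH].
  rewrite set_nil; split => [uy|[J []]]; last by rewrite pin_set0.
  by exists set0; rewrite pin_set0; split => // i; rewrite inE.
rewrite set_cons IH; set S := [set:: s].
have [kS|kS] := boolP (k \in S); first by rewrite (setUidPr _) ?sub1set.
split => [[J [uJ yJ]]|[J [uJ yJ]]].
  case/(f_split_pin _ _ _ _ _ kS): uJ => [u0|[u1 uk]].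
    by exists (J :\ k); split => // i /setD1P[_ /yJ].
  by exists (k |: J); split => // i /setU1P[->|/yJ].
exists J; split => //; apply/(f_split_pin _ _ _ _ _ kS).
have [kJ|kJ] := boolP (k \in J); [right|left].
  by rewrite (setUidPr (_ : [set k] \subset J)) ?sub1set //; split => //; apply: yJ.
by rewrite (setDidPl _) // disjoint_sym disjoints1.
Qed.

Lemma f_normal_form : normal_form x0 x1 phi f.
Proof.
move=> x u; have enumT : [set:: enum 'I_n] = setT.
  by apply/setP => i; rewrite !inE mem_enum.
by rewrite (f_decomp_on (enum 'I_n)) enumT; setoid_rewrite pin_setT.
Qed.

End FunctionDecomposition.

Arguments f_normal_form {U Y n X x0 x1 f phi}.

Lemma poly_normal_form {U : finType} {n : nat} {X : 'I_n -> Type}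
    {x0 x1 : forall i, X i} {phi : forall k, X k -> {set U}} (t : lpoly U n) :
  (forall k (a : X k), phi k (x0 k) \subset phi k a /\ phi k a \subset phi k (x1 k)) ->
  normal_form x0 x1 phi (fun x => leval t (fun i => phi i (x i))).
Proof.
move=> bound x u.
have lo i : phi i (x0 i) \subset phi i (x i) by case: (bound i (x i)).
have hi i : phi i (x i) \subset phi i (x1 i) by case: (bound i (x i)).
rewrite (leval_corner_decomp _ _ t _ _ _ u lo hi).
by setoid_rewrite (leval_hat1 x0 x1 phi t).
Qed.

Lemma normal_form_unique {U : finType} {n : nat} {X : 'I_n -> Type}
    {x0 x1 : forall i, X i} {phi : forall k, X k -> {set U}}
    {F G : (forall i, X i) -> {set U}} :
  normal_form x0 x1 phi F -> normal_form x0 x1 phi G ->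
  (forall I, F (hat1 x0 x1 I) = G (hat1 x0 x1 I)) -> forall x, F x = G x.
Proof.
move=> nF nG FG x; apply/setP => u; apply/idP/idP.
  by case/nF => I [uI ux]; apply/nG; exists I; rewrite -FG.
by case/nG => I [uI ux]; apply/nF; exists I; rewrite FG.
Qed.

Theorem mainTheorem8
  (U : finType) (Y : {set {set U}}) (HY : is_sublattice01 Y)
  (n : nat) (X : 'I_n -> Type) (x0 x1 : forall i, X i)
  (Hx01 : forall i, x0 i <> x1 i)
  (f : (forall i, X i) -> {set U}) (HfY : forall x, f x \in Y)
  (HBC : BC x0 x1 f)
  (HPhi : forall k (a : X k), PhiMinus Y x0 f a \subset PhiPlus Y x1 f a)
  (phi : forall k, X k -> {set U})
  (HphiY : forall k (a : X k), phi k a \in Y)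
  (Hbound : forall k (a : X k), phi k (x0 k) \subset phi k a /\ phi k a \subset phi k (x1 k))
  (Hphi : forall k (a : X k),
      PhiMinus Y x0 f a \subset phi k a /\ phi k a \subset PhiPlus Y x1 f a)
  (t : lpoly U n) (Ht : lconsts_in Y t) :
  (forall x : forall i, X i, f x = leval t (fun i => phi i (x i))) <->
  (forall I : {set 'I_n},
      leval t (fun i => if i \in I then phi i (x1 i) else phi i (x0 i))
      = f (hat1 x0 x1 I)).
Proof.
split => [fp I|pf]; first by rewrite fp leval_hat1.
apply: (normal_form_unique (f_normal_form HBC Hphi)).
  exact: poly_normal_form.
by move=> I; rewrite leval_hat1 pf.
Qed.
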